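(* Let $\varrho\in C^2(\mathbb{C};\mathbb{C})$ be not $\mathbb{R}$-affine, $K\subseteq\mathbb{C}^2$ compact and $\varepsilon>0$. Then there exist $\mathbb{C}$-affine maps $\phi:\mathbb{C}^2\to\mathbb{C}^{12}$ and $\psi:\mathbb{C}^{12}\to\mathbb{C}$ such that at least one of the three inequalities $$\sup_{(z,w)\in K}|(\psi\circ\varrho^{\times12}\circ\phi)(z,w)-zw|<\varepsilon,\quad \sup_{(z,w)\in K}|(\psi\circ\varrho^{\times12}\circ\phi)(z,w)-z\overline{w}|<\varepsilon,\quad \sup_{(z,w)\in K}|(\psi\circ\varrho^{\times12}\circ\phi)(z,w)-\overline{zw}|<\varepsilon$$ holds.
   Context: $\varrho$ is $\mathbb{R}$-affine if it is affine as a map $\mathbb{R}^2\to\mathbb{R}^2$ under $\mathbb{C}\cong\mathbb{R}^2$. A map $\mathbb{C}^a\to\mathbb{C}^b$ is $\mathbb{C}$-affine if it has the form $z\mapsto Az+b$ with complex $A,b$. $\varrho^{\times12}$ applies $\varrho$ componentwise on $\mathbb{C}^{12}$. $C^2(\mathbb{C};\mathbb{C})$: continuous partial derivatives (real sense) up to order 2. *)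

From Stdlib Require Import Reals List.
From Coquelicot Require Import Coquelicot.
Open Scope R_scope.

Definition pdx (g : C -> R) (p : C) : R := Derive (fun t => g (t, snd p)) (fst p).
Definition pdy (g : C -> R) (p : C) : R := Derive (fun t => g (fst p, t)) (snd p).

Definition has_partials (g : C -> R) : Prop :=
  forall p : C, ex_derive (fun t => g (t, snd p)) (fst p) /\
                ex_derive (fun t => g (fst p, t)) (snd p).

Definition C2_real (g : C -> R) : Prop :=
  has_partials g /\ has_partials (pdx g) /\ has_partials (pdy g) /\
  forall p : C,
    continuous g p /\ continuous (pdx g) p /\ continuous (pdy g) p /\
    continuous (pdx (pdx g)) p /\ continuous (pdy (pdx g)) p /\
    continuous (pdx (pdy g)) p /\ continuous (pdy (pdy g)) p.

Definition C2_complex (rho : C -> C) : Prop :=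
  C2_real (fun p => fst (rho p)) /\ C2_real (fun p => snd (rho p)).

Definition R_affine (rho : C -> C) : Prop :=
  exists a11 a12 a21 a22 b1 b2 : R, forall x y : R,
    rho (x, y) = (a11 * x + a12 * y + b1, a21 * x + a22 * y + b2).

Definition compact2 (K : C * C -> Prop) : Prop :=
  forall (I : Type) (U : I -> C * C -> Prop),
    (forall i, open (U i)) ->
    (forall x, K x -> exists i, U i x) ->
    exists l : list I, forall x, K x -> exists i, In i l /\ U i x.

Fixpoint csum (n : nat) (f : nat -> C) : C :=
  match n with O => RtoC 0 | S m => Cplus (csum m f) (f m) end.

(* C-affine phi : C^2 -> C^12, phi(z,w)_i = A i 0 * z + A i 1 * w + b i (i < 12). *)
Definition affine_2_12 (A0 A1 b : nat -> C) (zw : C * C) : nat -> C :=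
  fun i => Cplus (Cplus (Cmult (A0 i) (fst zw)) (Cmult (A1 i) (snd zw))) (b i).

Definition affine_12_1 (c : nat -> C) (d : C) (u : nat -> C) : C :=
  Cplus (csum 12 (fun i => Cmult (c i) (u i))) d.

Definition network (rho : C -> C) (A0 A1 b c : nat -> C) (d : C) (zw : C * C) : C :=
  affine_12_1 c d (fun i => rho (affine_2_12 A0 A1 b zw i)).

Definition sup_lt (K : C * C -> Prop) (F G : C * C -> C) (eps : R) : Prop :=
  exists delta : R, delta < eps /\ forall zw, K zw -> Cmod (Cminus (F zw) (G zw)) <= delta.

From Stdlib Require Import Reals Lra Lia List Classical.
From Coquelicot Require Import Coquelicot.
Open Scope R_scope.

(* Since rho is C^2 and not R-affine, its real Hessian
   B_p(u,v) = rho_xx u1 v1 + rho_xy (u1 v2 + u2 v1) + rho_yy u2 v2 is nonzero at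
   some point p (a C^2 map with vanishing Hessian is affine).  The second
   difference rho(p+u+v) - rho(p+u) - rho(p+v) + rho(p) equals B_p(u,v) up to
   o(|u|^2 + |v|^2), by second-order Taylor expansion; each second difference
   costs three neurons plus a constant.  Polarization: probing B_p on the
   direction pairs (z,w), (iz,w), (z,iw), (iz,iw) with weights in {1,-1,i,-i}
   yields N zw, N z conj(w) or N conj(zw), and the three multipliers N cannot
   all vanish when B_p <> 0.  Taking the four second differences at scale t,
   with u = t dir z and v = t dir' w, and dividing by N t^2 then gives a
   12-neuron network approximating the target uniformly on the (bounded)
   compact set K once t is small. *)

Definition between (x y s : R) : Prop := Rmin x y <= s <= Rmax x y.

Lemma between_trans x y s r : between x y s -> between x s r -> between x y r.
Proof. unfold between, Rmin, Rmax; repeat destruct Rle_dec; lra. Qed.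

Lemma between_l x y : between x y x.
Proof. unfold between, Rmin, Rmax; repeat destruct Rle_dec; lra. Qed.

Lemma between_dist x h s : between x (x + h) s -> Rabs (s - x) <= Rabs h.
Proof.
  unfold between, Rmin, Rmax, Rabs.
  repeat destruct Rle_dec; repeat destruct Rcase_abs; lra.
Qed.

Lemma mvt_bound (phi dphi : R -> R) x0 h B :
  (forall s, between x0 (x0 + h) s -> is_derive phi s (dphi s)) ->
  (forall s, between x0 (x0 + h) s -> Rabs (dphi s) <= B) ->
  Rabs (phi (x0 + h) - phi x0) <= B * Rabs h.
Proof.
  intros Hd Hb.
  destruct (MVT_gen phi x0 (x0 + h) dphi) as [c [Hc ->]].
  - intros x Hx. apply Hd. unfold between. lra.
  - intros x Hx. apply continuity_pt_filterlim.
    apply (ex_derive_continuous (K := R_AbsRing) (V := R_NormedModule)).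
    exists (dphi x). apply Hd. exact Hx.
  - replace (x0 + h - x0) with h by ring. rewrite Rabs_mult.
    apply Rmult_le_compat_r; [apply Rabs_pos | exact (Hb c Hc)].
Qed.

Lemma affine_of_constant_derivative (g : R -> R) (c : R) :
  (forall t, is_derive g t c) -> forall x, g x = g 0 + c * x.
Proof.
  intros Hg x.
  pose proof (mvt_bound (fun t => g t - c * t) (fun _ => 0) 0 x 0) as Hinc.
  cbv beta in Hinc. rewrite Rplus_0_l, Rmult_0_l in Hinc.
  assert (Habs : Rabs (g x - c * x - (g 0 - c * 0)) <= 0).
  { apply Hinc.
    - intros s _. replace 0 with (c - c) by ring.
      apply (is_derive_minus g (fun t => c * t)); [apply Hg |].
      auto_derive; [exact I | ring].
    - intros; rewrite Rabs_R0; lra. }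
  pose proof (Rabs_pos (g x - c * x - (g 0 - c * 0))).
  assert (Hzero : Rabs (g x - c * x - (g 0 - c * 0)) = 0) by lra.
  apply Rabs_eq_0 in Hzero. lra.
Qed.

Lemma taylor1_bound (g g1 g2 : R -> R) x0 h K e :
  (forall s, between x0 (x0 + h) s ->
     is_derive g s (g1 s) /\ is_derive g1 s (g2 s) /\ Rabs (g2 s - K) <= e) ->
  Rabs (g (x0 + h) - g x0 - h * g1 x0 - /2 * K * h ^ 2) <= e * h ^ 2.
Proof.
  intros H.
  assert (He : 0 <= e).
  { destruct (H x0 (between_l _ _)) as [_ [_ He]].
    eapply Rle_trans; [apply Rabs_pos | exact He]. }
  assert (Hg1 : forall s, between x0 (x0 + h) s ->
     Rabs (g1 s - g1 x0 - K * (s - x0)) <= e * Rabs h).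
  { intros s Hs.
    eapply Rle_trans;
      [| apply Rmult_le_compat_l; [exact He | exact (between_dist _ _ _ Hs)]].
    replace (g1 s - g1 x0 - K * (s - x0))
      with ((g1 (x0 + (s - x0)) - K * (x0 + (s - x0))) - (g1 x0 - K * x0))
      by (replace (x0 + (s - x0)) with s by ring; ring).
    apply (mvt_bound (fun t => g1 t - K * t) (fun t => g2 t - K)).
    - intros r Hr. replace (x0 + (s - x0)) with s in Hr by ring.
      apply (is_derive_minus g1 (fun t => K * t)).
      + apply H. eapply between_trans; eauto.
      + auto_derive; [exact I | ring].
    - intros r Hr. replace (x0 + (s - x0)) with s in Hr by ring.
      apply H. eapply between_trans; eauto. }
  assert (Hsq : h ^ 2 = Rabs h * Rabs h)
    by (rewrite <- Rabs_mult, Rabs_right; [ring | nra]).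
  replace (e * h ^ 2) with (e * Rabs h * Rabs h) by (rewrite Hsq; ring).
  replace (g (x0 + h) - g x0 - h * g1 x0 - / 2 * K * h ^ 2) with
    ((g (x0 + h) - (x0 + h) * g1 x0 - /2 * K * (x0 + h - x0) ^ 2)
     - (g x0 - x0 * g1 x0 - /2 * K * (x0 - x0) ^ 2)) by ring.
  apply (mvt_bound (fun s => g s - s * g1 x0 - /2 * K * (s - x0) ^ 2)
           (fun s => g1 s - g1 x0 - K * (s - x0))); [| exact Hg1].
  intros s Hs. destruct (H s Hs) as [Hg _].
  apply (is_derive_minus _ (fun s => /2 * K * (s - x0) ^ 2)).
  - apply (is_derive_minus g (fun s => s * g1 x0)); [exact Hg |].
    auto_derive; [exact I | ring].
  - auto_derive; [exact I | simpl; field].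
Qed.

Definition coord_bounded (M : R) (z : C) : Prop := Rabs (fst z) <= M /\ Rabs (snd z) <= M.

(* The (real) Hessian form of f : R^2 -> R at p, using the mixed partial
   d/dy d/dx f. *)
Definition hess_real (f : C -> R) (p u v : C) : R :=
  pdx (pdx f) p * fst u * fst v + pdy (pdx f) p * (fst u * snd v + snd u * fst v)
  + pdy (pdy f) p * snd u * snd v.

Definition sdiff_real (f : C -> R) (p u v : C) : R :=
  f (p + (u + v))%C - f (p + u)%C - f (p + v)%C + f p.

Lemma pdx_correct (f : C -> R) (p : C) : has_partials f ->
  is_derive (fun t => f (t, snd p)) (fst p) (pdx f p).
Proof. intros Hf. exact (Derive_correct _ _ (proj1 (Hf p))). Qed.

Lemma pdy_correct (f : C -> R) (p : C) : has_partials f ->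
  is_derive (fun t => f (fst p, t)) (snd p) (pdy f p).
Proof. intros Hf. exact (Derive_correct _ _ (proj2 (Hf p))). Qed.

Lemma continuous_square (g : C -> R) (p : C) e : continuous g p -> 0 < e ->
  exists d, 0 < d /\ forall q : C,
    Rabs (fst q - fst p) < d -> Rabs (snd q - snd p) < d -> Rabs (g q - g p) <= e.
Proof.
  intros Hc He.
  destruct (Hc (ball (g p) (mkposreal e He)) (locally_ball _ _)) as [d Hd].
  exists d. split; [apply cond_pos |].
  intros q H1 H2. apply Rlt_le, (Hd q). split; assumption.
Qed.

Lemma taylor2_combine (X1 X2 X3 h1 h2 e m : R) : 0 < e ->
  Rabs h1 <= m -> Rabs h2 <= m ->
  Rabs X1 <= e * h1 ^ 2 -> Rabs X2 <= e * Rabs h2 -> Rabs X3 <= e * h2 ^ 2 ->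
  Rabs (X1 + h1 * X2 + X3) <= 3 * e * m ^ 2.
Proof.
  intros He Hm1 Hm2 E1 E2 E3.
  pose proof (Rabs_pos h1); pose proof (Rabs_pos h2).
  rewrite <- pow2_abs in E1, E3. simpl in E1, E3. rewrite Rmult_1_r in E1, E3.
  assert (Rabs (h1 * X2) <= Rabs h1 * (e * Rabs h2))
    by (rewrite Rabs_mult; apply Rmult_le_compat_l; auto).
  pose proof (Rabs_triang (X1 + h1 * X2) X3); pose proof (Rabs_triang X1 (h1 * X2)).
  assert (e * (Rabs h1 * Rabs h1) <= e * (m * m)) by (apply Rmult_le_compat_l; nra).
  assert (e * (Rabs h2 * Rabs h2) <= e * (m * m)) by (apply Rmult_le_compat_l; nra).
  assert (e * (Rabs h1 * Rabs h2) <= e * (m * m)) by (apply Rmult_le_compat_l; nra).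
  replace (m ^ 2) with (m * m) by ring. lra.
Qed.

(* Second-order Taylor expansion of a C^2 function at p, with remainder at most
   3 e m^2 for increments of sup-norm m < d: first expand along x at height
   b + h2, then along y, controlling the drift of the x-derivative by the
   mixed partial. *)
Lemma taylor2_bound (f : C -> R) (p : C) e : C2_real f -> 0 < e ->
  exists d, 0 < d /\ forall (h : C) m, coord_bounded m h -> m < d ->
    Rabs (f (p + h)%C - f p - fst h * pdx f p - snd h * pdy f p - /2 * hess_real f p h h)
      <= 3 * e * m ^ 2.
Proof.
  intros [P0 [P1 [P2 Hc]]] He.
  destruct p as [a b].
  destruct (Hc (a, b)) as [_ [_ [_ [Cxx [Cyx [_ Cyy]]]]]].
  destruct (continuous_square _ _ _ Cxx He) as [d1 [Hd1 D1]].
  destruct (continuous_square _ _ _ Cyx He) as [d2 [Hd2 D2]].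
  destruct (continuous_square _ _ _ Cyy He) as [d3 [Hd3 D3]].
  exists (Rmin d1 (Rmin d2 d3)). split; [repeat apply Rmin_pos; auto |].
  intros [h1 h2] m [Hm1 Hm2] Hmd; simpl in Hm1, Hm2.
  assert (M1 : m < d1) by (eapply Rlt_le_trans; [exact Hmd | apply Rmin_l]).
  assert (M2 : m < d2).
  { eapply Rlt_le_trans; [exact Hmd |].
    eapply Rle_trans; [apply Rmin_r | apply Rmin_l]. }
  assert (M3 : m < d3).
  { eapply Rlt_le_trans; [exact Hmd |].
    eapply Rle_trans; [apply Rmin_r | apply Rmin_r]. }
  set (Kxx := pdx (pdx f) (a, b)); set (Kxy := pdy (pdx f) (a, b));
    set (Kyy := pdy (pdy f) (a, b)).
  assert (E1 : Rabs (f (a + h1, b + h2) - f (a, b + h2) - h1 * pdx f (a, b + h2)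
                     - /2 * Kxx * h1 ^ 2) <= e * h1 ^ 2).
  { apply (taylor1_bound (fun t => f (t, b + h2)) (fun t => pdx f (t, b + h2))
             (fun t => pdx (pdx f) (t, b + h2))).
    intros s Hs. split; [| split].
    - exact (pdx_correct f (s, b + h2) P0).
    - exact (pdx_correct (pdx f) (s, b + h2) P1).
    - apply D1; simpl.
      + pose proof (between_dist _ _ _ Hs); lra.
      + replace (b + h2 - b) with h2 by ring. lra. }
  assert (E2 : Rabs (pdx f (a, b + h2) - Kxy * (b + h2) - (pdx f (a, b) - Kxy * b))
                 <= e * Rabs h2).
  { apply (mvt_bound (fun t => pdx f (a, t) - Kxy * t) (fun t => pdy (pdx f) (a, t) - Kxy)).
    - intros s Hs. apply (is_derive_minus _ (fun t => Kxy * t)).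
      + exact (pdy_correct (pdx f) (a, s) P1).
      + auto_derive; [exact I | ring].
    - intros s Hs. apply D2; simpl.
      + replace (a - a) with 0 by ring. rewrite Rabs_R0. lra.
      + pose proof (between_dist _ _ _ Hs); lra. }
  assert (E3 : Rabs (f (a, b + h2) - f (a, b) - h2 * pdy f (a, b) - /2 * Kyy * h2 ^ 2)
                 <= e * h2 ^ 2).
  { apply (taylor1_bound (fun t => f (a, t)) (fun t => pdy f (a, t))
             (fun t => pdy (pdy f) (a, t))).
    intros s Hs. split; [| split].
    - exact (pdy_correct f (a, s) P0).
    - exact (pdy_correct (pdy f) (a, s) P2).
    - apply D3; simpl.
      + replace (a - a) with 0 by ring. rewrite Rabs_R0. lra.
      + pose proof (between_dist _ _ _ Hs); lra. }
  set (X1 := f (a + h1, b + h2) - f (a, b + h2) - h1 * pdx f (a, b + h2)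
             - /2 * Kxx * h1 ^ 2) in E1.
  set (X2 := pdx f (a, b + h2) - Kxy * (b + h2) - (pdx f (a, b) - Kxy * b)) in E2.
  set (X3 := f (a, b + h2) - f (a, b) - h2 * pdy f (a, b) - /2 * Kyy * h2 ^ 2) in E3.
  unfold hess_real, Cplus; cbn [fst snd]; fold Kxx Kxy Kyy.
  replace (f (a + h1, b + h2) - f (a, b) - h1 * pdx f (a, b) - h2 * pdy f (a, b) -
           / 2 * (Kxx * h1 * h1 + Kxy * (h1 * h2 + h2 * h1) + Kyy * h2 * h2))
    with (X1 + h1 * X2 + X3) by (unfold X1, X2, X3; field).
  apply (taylor2_combine X1 X2 X3 h1 h2 e m); assumption.
Qed.

(* The second difference of a C^2 function is the Hessian form up to 18 e m^2,
   for increments of sup-norm m with 2m < d: the affine and quadratic parts of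
   the three Taylor expansions cancel except for the cross term. *)
Lemma sdiff_real_bound (f : C -> R) (p : C) e : C2_real f -> 0 < e ->
  exists d, 0 < d /\ forall (u v : C) m,
    coord_bounded m u -> coord_bounded m v -> 2 * m < d ->
    Rabs (sdiff_real f p u v - hess_real f p u v) <= 18 * e * m ^ 2.
Proof.
  intros Hf He. destruct (taylor2_bound f p e Hf He) as [d [Hd T]].
  exists d. split; [exact Hd |].
  intros u v m Hu Hv Hm.
  assert (0 <= m) by (destruct Hu as [U1 _]; pose proof (Rabs_pos (fst u)); lra).
  assert (Huv : coord_bounded (2 * m) (u + v)%C).
  { destruct Hu as [U1 U2], Hv as [V1 V2]. split; cbn [fst snd Cplus].
    - pose proof (Rabs_triang (fst u) (fst v)); lra.
    - pose proof (Rabs_triang (snd u) (snd v)); lra. }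
  pose proof (T _ _ Huv Hm) as Tuv.
  pose proof (T _ _ Hu ltac:(lra)) as Tu.
  pose proof (T _ _ Hv ltac:(lra)) as Tv.
  set (R1 := f (p + (u + v))%C - f p - fst (u + v)%C * pdx f p - snd (u + v)%C * pdy f p
             - / 2 * hess_real f p (u + v) (u + v)) in Tuv.
  set (R2 := f (p + u)%C - f p - fst u * pdx f p - snd u * pdy f p
             - / 2 * hess_real f p u u) in Tu.
  set (R3 := f (p + v)%C - f p - fst v * pdx f p - snd v * pdy f p
             - / 2 * hess_real f p v v) in Tv.
  replace (sdiff_real f p u v - hess_real f p u v) with (R1 - R2 - R3)
    by (unfold R1, R2, R3, sdiff_real, hess_real, Cplus; cbn [fst snd]; field).
  unfold Rminus. eapply Rle_trans; [apply Rabs_triang |]. rewrite Rabs_Ropp.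
  eapply Rle_trans; [apply Rplus_le_compat_r, Rabs_triang |]. rewrite Rabs_Ropp.
  nra.
Qed.

(* A C^2 function with vanishing Hessian coefficients is affine: integrate the
   partial derivatives, which are constant. *)
Lemma affine_of_zero_hessian (f : C -> R) : C2_real f ->
  (forall p, pdx (pdx f) p = 0 /\ pdy (pdx f) p = 0 /\ pdy (pdy f) p = 0) ->
  exists a1 a2 c, forall x y, f (x, y) = a1 * x + a2 * y + c.
Proof.
  intros [P0 [P1 [P2 _]]] H.
  assert (Fx_x : forall x y, pdx f (x, y) = pdx f (0, y)).
  { intros x y. rewrite (affine_of_constant_derivative (fun t => pdx f (t, y)) 0); [ring |].
    intros t. pose proof (pdx_correct (pdx f) (t, y) P1) as Hd.
    rewrite (proj1 (H (t, y))) in Hd. exact Hd. }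
  assert (Fx_y : forall y, pdx f (0, y) = pdx f (0, 0)).
  { intros y. rewrite (affine_of_constant_derivative (fun t => pdx f (0, t)) 0); [ring |].
    intros t. pose proof (pdy_correct (pdx f) (0, t) P1) as Hd.
    rewrite (proj1 (proj2 (H (0, t)))) in Hd. exact Hd. }
  assert (Fy_y : forall y, pdy f (0, y) = pdy f (0, 0)).
  { intros y. rewrite (affine_of_constant_derivative (fun t => pdy f (0, t)) 0); [ring |].
    intros t. pose proof (pdy_correct (pdy f) (0, t) P2) as Hd.
    rewrite (proj2 (proj2 (H (0, t)))) in Hd. exact Hd. }
  assert (Along_x : forall x y, f (x, y) = f (0, y) + pdx f (0, 0) * x).
  { intros x y. apply (affine_of_constant_derivative (fun t => f (t, y))).
    intros t. rewrite <- (Fx_y y), <- (Fx_x t y). exact (pdx_correct f (t, y) P0). }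
  assert (Along_y : forall y, f (0, y) = f (0, 0) + pdy f (0, 0) * y).
  { intros y. apply (affine_of_constant_derivative (fun t => f (0, t))).
    intros t. rewrite <- (Fy_y t). exact (pdy_correct f (0, t) P0). }
  exists (pdx f (0, 0)), (pdy f (0, 0)), (f (0, 0)).
  intros x y. rewrite Along_x, Along_y. ring.
Qed.

Definition bilin (a b c u v : C) : C :=
  (a * RtoC (fst u * fst v) + b * RtoC (fst u * snd v + snd u * fst v)
   + c * RtoC (snd u * snd v))%C.

Definition hxx (rho : C -> C) (p : C) : C :=
  (pdx (pdx (fun q => fst (rho q))) p, pdx (pdx (fun q => snd (rho q))) p).
Definition hxy (rho : C -> C) (p : C) : C :=
  (pdy (pdx (fun q => fst (rho q))) p, pdy (pdx (fun q => snd (rho q))) p).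
Definition hyy (rho : C -> C) (p : C) : C :=
  (pdy (pdy (fun q => fst (rho q))) p, pdy (pdy (fun q => snd (rho q))) p).

Definition hess (rho : C -> C) (p : C) : C -> C -> C :=
  bilin (hxx rho p) (hxy rho p) (hyy rho p).

Definition sdiff (rho : C -> C) (p u v : C) : C :=
  (rho (p + (u + v)) - rho (p + u) - rho (p + v) + rho p)%C.

Lemma Cmod_le_components (x : C) B :
  Rabs (fst x) <= B -> Rabs (snd x) <= B -> Cmod x <= 2 * B.
Proof.
  intros H1 H2.
  assert (Hsqrt : sqrt 2 <= 2).
  { rewrite <- (sqrt_pow2 2) at 2 by lra. apply sqrt_le_1_alt. lra. }
  eapply Rle_trans; [apply Cmod_2Rmax |].
  apply Rmult_le_compat; [apply sqrt_pos | | exact Hsqrt | apply Rmax_lub; assumption].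
  eapply Rle_trans; [apply Rabs_pos | apply Rmax_l].
Qed.

Lemma sdiff_bound (rho : C -> C) (p : C) e : C2_complex rho -> 0 < e ->
  exists d, 0 < d /\ forall (u v : C) m,
    coord_bounded m u -> coord_bounded m v -> 2 * m < d ->
    Cmod (sdiff rho p u v - hess rho p u v)%C <= 36 * e * m ^ 2.
Proof.
  intros [Hre Him] He.
  destruct (sdiff_real_bound _ p e Hre He) as [d1 [Hd1 D1]].
  destruct (sdiff_real_bound _ p e Him He) as [d2 [Hd2 D2]].
  exists (Rmin d1 d2). split; [apply Rmin_pos; assumption |].
  intros u v m Hu Hv Hm.
  pose proof (Rmin_l d1 d2); pose proof (Rmin_r d1 d2).
  replace (36 * e * m ^ 2) with (2 * (18 * e * m ^ 2)) by ring.
  apply Cmod_le_components.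
  - replace (fst (sdiff rho p u v - hess rho p u v)%C)
      with (sdiff_real (fun q => fst (rho q)) p u v - hess_real (fun q => fst (rho q)) p u v)
      by (unfold sdiff, sdiff_real, hess, bilin, hess_real, hxx, hxy, hyy; simpl; ring).
    apply D1; auto; lra.
  - replace (snd (sdiff rho p u v - hess rho p u v)%C)
      with (sdiff_real (fun q => snd (rho q)) p u v - hess_real (fun q => snd (rho q)) p u v)
      by (unfold sdiff, sdiff_real, hess, bilin, hess_real, hxx, hxy, hyy; simpl; ring).
    apply D2; auto; lra.
Qed.

Lemma hessian_nonzero (rho : C -> C) : C2_complex rho -> ~ R_affine rho ->
  exists p, ~ (hxx rho p = 0 /\ hxy rho p = 0 /\ hyy rho p = 0)%C.
Proof.
  intros [Hre Him] Hnaff. apply NNPP. intros Hnone. apply Hnaff.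
  assert (Hzero : forall p, (hxx rho p = 0 /\ hxy rho p = 0 /\ hyy rho p = 0)%C).
  { intros p. apply NNPP. intros Hp. apply Hnone. exists p. exact Hp. }
  destruct (affine_of_zero_hessian _ Hre) as [a11 [a12 [b1 E1]]].
  { intros p. destruct (Hzero p) as [Zxx [Zxy Zyy]].
    apply (f_equal fst) in Zxx, Zxy, Zyy. auto. }
  destruct (affine_of_zero_hessian _ Him) as [a21 [a22 [b2 E2]]].
  { intros p. destruct (Hzero p) as [Zxx [Zxy Zyy]].
    apply (f_equal snd) in Zxx, Zxy, Zyy. auto. }
  exists a11, a12, a21, a22, b1, b2. intros x y.
  rewrite (surjective_pairing (rho (x, y))), <- E1, <- E2. reflexivity.
Qed.

Definition dir_z (k : nat) : C := if Nat.odd k then Ci else 1%C.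
Definition dir_w (k : nat) : C := if Nat.ltb k 2 then 1%C else Ci.

Definition polar (W : nat -> C) (B : C -> C -> C) (z w : C) : C :=
  csum 4 (fun k => W k * B (dir_z k * z) (dir_w k * w))%C.

Definition weights4 (w0 w1 w2 w3 : C) (k : nat) : C :=
  match k with 0 => w0 | 1 => w1 | 2 => w2 | _ => w3 end%nat.

Lemma polar_zw (a b c z w : C) :
  polar (weights4 1 (- Ci) (- Ci) (- (1))) (bilin a b c) z w
  = ((a - c - RtoC 2 * Ci * b) * (z * w))%C.
Proof.
  destruct a, b, c, z, w.
  unfold polar, weights4, dir_z, dir_w, bilin; cbn [csum Nat.odd Nat.ltb Nat.leb Nat.even].
  unfold Cplus, Cmult, Cminus, Copp, RtoC, Ci; simpl; f_equal; ring.
Qed.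

Lemma polar_zconjw (a b c z w : C) :
  polar (weights4 1 (- Ci) Ci 1) (bilin a b c) z w = ((a + c) * (z * Cconj w))%C.
Proof.
  destruct a, b, c, z, w.
  unfold polar, weights4, dir_z, dir_w, bilin; cbn [csum Nat.odd Nat.ltb Nat.leb Nat.even].
  unfold Cplus, Cmult, Cminus, Copp, RtoC, Ci, Cconj; simpl; f_equal; ring.
Qed.

Lemma polar_conjzw (a b c z w : C) :
  polar (weights4 1 Ci Ci (- (1))) (bilin a b c) z w
  = ((a - c + RtoC 2 * Ci * b) * Cconj (z * w))%C.
Proof.
  destruct a, b, c, z, w.
  unfold polar, weights4, dir_z, dir_w, bilin; cbn [csum Nat.odd Nat.ltb Nat.leb Nat.even].
  unfold Cplus, Cmult, Cminus, Copp, RtoC, Ci, Cconj; simpl; f_equal; ring.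
Qed.

Lemma weights4_unimodular (w0 w1 w2 w3 : C) :
  Cmod w0 = 1 -> Cmod w1 = 1 -> Cmod w2 = 1 -> Cmod w3 = 1 ->
  forall k, Cmod (weights4 w0 w1 w2 w3 k) <= 1.
Proof. intros H0 H1 H2 H3 [|[|[|]]]; simpl; lra. Qed.

Lemma Cmod_Ci : Cmod Ci = 1.
Proof.
  unfold Cmod, Ci; simpl. replace (0 * (0 * 1) + 1 * (1 * 1)) with 1 by ring.
  apply sqrt_1.
Qed.

Lemma polarization (a b c : C) : ~ (a = 0 /\ b = 0 /\ c = 0)%C ->
  exists (N : C) (W : nat -> C), N <> 0%C /\ (forall k, Cmod (W k) <= 1) /\
    ((forall z w, polar W (bilin a b c) z w = N * (z * w))%C \/
     (forall z w, polar W (bilin a b c) z w = N * (z * Cconj w))%C \/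
     (forall z w, polar W (bilin a b c) z w = N * Cconj (z * w))%C).
Proof.
  intros Hnz.
  assert (Hmi : Cmod (- Ci) = 1) by (rewrite Cmod_opp; exact Cmod_Ci).
  assert (Hm1 : Cmod (- (1)) = 1) by exact Cmod_m1.
  destruct (classic ((a - c - RtoC 2 * Ci * b)%C = 0%C)) as [ZA | NA].
  2:{ exists (a - c - RtoC 2 * Ci * b)%C, (weights4 1 (- Ci) (- Ci) (- (1))).
      split; [exact NA |]. split.
      - apply weights4_unimodular; auto using Cmod_1.
      - left. apply polar_zw. }
  destruct (classic ((a + c)%C = 0%C)) as [ZB | NB].
  2:{ exists (a + c)%C, (weights4 1 (- Ci) Ci 1). split; [exact NB |]. split.
      - apply weights4_unimodular; auto using Cmod_1, Cmod_Ci.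
      - right; left. apply polar_zconjw. }
  destruct (classic ((a - c + RtoC 2 * Ci * b)%C = 0%C)) as [ZC | NC].
  2:{ exists (a - c + RtoC 2 * Ci * b)%C, (weights4 1 Ci Ci (- (1))).
      split; [exact NC |]. split.
      - apply weights4_unimodular; auto using Cmod_1, Cmod_Ci.
      - right; right. apply polar_conjzw. }
  exfalso. apply Hnz.
  destruct a as [a1 a2], b as [b1 b2], c as [c1 c2].
  unfold Cplus, Cmult, Cminus, Copp, RtoC, Ci in ZA, ZB, ZC; simpl in ZA, ZB, ZC.
  injection ZA; injection ZB; injection ZC; intros.
  unfold RtoC; repeat split; f_equal; lra.
Qed.

(* The network realizing weighted second differences: neuron 3k + r (k < 4)
   evaluates rho at p + t (dir_z k z + dir_w k w) for r = 0, at p + t dir_z k z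
   for r = 1 and at p + t dir_w k w for r = 2, and is weighted by g k, - g k,
   - g k respectively. *)
Definition net_A0 (t : R) (i : nat) : C :=
  if (i mod 3 =? 2)%nat then 0%C else (RtoC t * dir_z (i / 3))%C.
Definition net_A1 (t : R) (i : nat) : C :=
  if (i mod 3 =? 1)%nat then 0%C else (RtoC t * dir_w (i / 3))%C.
Definition net_c (g : nat -> C) (i : nat) : C :=
  if (i mod 3 =? 0)%nat then g (i / 3)%nat else (- g (i / 3)%nat)%C.

Lemma network_sdiff (rho : C -> C) (t : R) (p : C) (g : nat -> C) (zw : C * C) :
  network rho (net_A0 t) (net_A1 t) (fun _ => p) (net_c g) (csum 4 g * rho p)%C zw
  = csum 4 (fun k => g k *
      sdiff rho p (RtoC t * dir_z k * fst zw) (RtoC t * dir_w k * snd zw))%C.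
Proof.
  unfold network, affine_12_1, affine_2_12, net_A0, net_A1, net_c, sdiff.
  cbn [csum Nat.div Nat.modulo Nat.divmod Nat.sub Nat.eqb fst snd].
  rewrite !Cmult_0_l, !Cplus_0_l, !Cplus_0_r, !(Cplus_comm _ p).
  ring.
Qed.

Definition net_weights (W : nat -> C) (N : C) (t : R) (k : nat) : C :=
  (W k / (N * RtoC (t ^ 2)))%C.

Lemma bilin_scale (a b c u v : C) (t : R) :
  bilin a b c (RtoC t * u) (RtoC t * v) = (RtoC (t ^ 2) * bilin a b c u v)%C.
Proof. destruct a, b, c, u, v. unfold bilin, Cplus, Cmult, RtoC; simpl; f_equal; ring. Qed.

Lemma RtoC_neq_0 (x : R) : x <> 0 -> RtoC x <> 0%C.
Proof. intros Hx E. apply Hx. exact (f_equal fst E). Qed.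

(* If W probes N T out of the Hessian, the error of the second-difference network
   at zw is the weighted sum of the Taylor errors of the four second differences
   (the Hessian is quadratic, so the scale t cancels against the weights). *)
Lemma network_error (rho : C -> C) (p : C) (t : R) (N : C) (W : nat -> C)
    (T : C * C -> C) (zw : C * C) :
  t <> 0 -> N <> 0%C ->
  polar W (hess rho p) (fst zw) (snd zw) = (N * T zw)%C ->
  (network rho (net_A0 t) (net_A1 t) (fun _ => p) (net_c (net_weights W N t))
     (csum 4 (net_weights W N t) * rho p) zw - T zw)%C
  = csum 4 (fun k => net_weights W N t k *
      (sdiff rho p (RtoC t * dir_z k * fst zw) (RtoC t * dir_w k * snd zw)
       - hess rho p (RtoC t * dir_z k * fst zw) (RtoC t * dir_w k * snd zw)))%C.
Proof.
  intros Ht HN Hid.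
  assert (HT : T zw = (/ N * polar W (hess rho p) (fst zw) (snd zw))%C)
    by (rewrite Hid; field; exact HN).
  assert (Ht2 : RtoC (t ^ 2) <> 0%C) by (apply RtoC_neq_0, pow_nonzero, Ht).
  rewrite network_sdiff, HT.
  unfold polar, hess, net_weights; cbn [csum].
  rewrite <- !(Cmult_assoc (RtoC t)), !bilin_scale.
  field. split; assumption.
Qed.

Lemma csum_Cmod_bound (n : nat) (f : nat -> C) (B : R) :
  (forall k, (k < n)%nat -> Cmod (f k) <= B) -> Cmod (csum n f) <= INR n * B.
Proof.
  induction n as [| n IH]; intros Hf; cbn [csum].
  - rewrite Cmod_0. simpl. lra.
  - eapply Rle_trans; [apply Cmod_triangle |].
    rewrite S_INR, Rmult_plus_distr_r, Rmult_1_l.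
    apply Rplus_le_compat; [apply IH; intros k Hk; apply Hf; lia | apply Hf; lia].
Qed.

Lemma dir_z_cases (k : nat) : dir_z k = 1%C \/ dir_z k = Ci.
Proof. unfold dir_z. destruct (Nat.odd k); auto. Qed.

Lemma dir_w_cases (k : nat) : dir_w k = 1%C \/ dir_w k = Ci.
Proof. unfold dir_w. destruct (Nat.ltb k 2); auto. Qed.

(* Multiplying by 1 or i permutes the coordinates up to sign, and the real
   factor t >= 0 scales the bound. *)
Lemma coord_bounded_scaled (t M : R) (d z : C) : 0 <= t -> (d = 1%C \/ d = Ci) ->
  coord_bounded M z -> coord_bounded (t * M) (RtoC t * d * z)%C.
Proof.
  intros Ht Hd [H1 H2]. destruct z as [z1 z2]; simpl in H1, H2.
  assert (Hmul : forall x, Rabs x <= M -> Rabs (t * x) <= t * M).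
  { intros x Hx. rewrite Rabs_mult, (Rabs_pos_eq t Ht). apply Rmult_le_compat_l; assumption. }
  destruct Hd as [-> | ->]; unfold coord_bounded, Cmult, RtoC, Ci; simpl.
  - replace ((t * 1 - 0 * 0) * z1 - (t * 0 + 0 * 1) * z2) with (t * z1) by ring.
    replace ((t * 1 - 0 * 0) * z2 + (t * 0 + 0 * 1) * z1) with (t * z2) by ring.
    auto.
  - replace ((t * 0 - 0 * 1) * z1 - (t * 1 + 0 * 0) * z2) with (- (t * z2)) by ring.
    replace ((t * 0 - 0 * 1) * z2 + (t * 1 + 0 * 0) * z1) with (t * z1) by ring.
    rewrite Rabs_Ropp. auto.
Qed.

Lemma net_weights_bound (W : nat -> C) (N : C) (t : R) (k : nat) :
  Cmod (W k) <= 1 -> N <> 0%C -> t <> 0 ->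
  Cmod (net_weights W N t k) <= / (Cmod N * t ^ 2).
Proof.
  intros HW HN Ht. unfold net_weights.
  assert (Ht2 : 0 < t ^ 2) by (apply pow2_gt_0, Ht).
  assert (HNpos : 0 < Cmod N) by (apply Cmod_gt_0, HN).
  assert (HNt : (N * RtoC (t ^ 2))%C <> 0%C).
  { apply Cmod_gt_0. rewrite Cmod_mult, Cmod_R, Rabs_pos_eq by lra. nra. }
  rewrite Cmod_div, Cmod_mult, Cmod_R, Rabs_pos_eq by (assumption || lra).
  unfold Rdiv. rewrite <- (Rmult_1_l (/ (Cmod N * t ^ 2))) at 2.
  apply Rmult_le_compat_r; [apply Rlt_le, Rinv_0_lt_compat; nra | exact HW].
Qed.

(* Core estimate: on a coordinate-bounded set, if unimodular weights W probe
   N T (N <> 0) out of the Hessian at p, some 12-neuron network approximates T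
   to accuracy eps: take second differences at scale t, small enough that
   their Taylor errors are o(t^2) uniformly, and divide by N t^2. *)
Lemma network_approximation (rho : C -> C) (p : C) (K : C * C -> Prop) (M eps : R)
    (N : C) (W : nat -> C) (T : C * C -> C) :
  C2_complex rho -> 0 < M ->
  (forall zw, K zw -> coord_bounded M (fst zw) /\ coord_bounded M (snd zw)) ->
  0 < eps -> N <> 0%C -> (forall k, Cmod (W k) <= 1) ->
  (forall z w, polar W (hess rho p) z w = (N * T (z, w))%C) ->
  exists (A0 A1 b c : nat -> C) (d : C), sup_lt K (network rho A0 A1 b c d) T eps.
Proof.
  intros Hrho HM HK Heps HN HW Hid.
  assert (HNpos : 0 < Cmod N) by (apply Cmod_gt_0, HN).
  set (e := eps * Cmod N / (288 * M ^ 2)).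
  assert (He : 0 < e) by (unfold e; apply Rdiv_lt_0_compat; nra).
  destruct (sdiff_bound rho p e Hrho He) as [d [Hd Hsd]].
  set (t := d / (4 * M)).
  assert (Ht : 0 < t) by (unfold t; apply Rdiv_lt_0_compat; lra).
  exists (net_A0 t), (net_A1 t), (fun _ => p), (net_c (net_weights W N t)),
    (csum 4 (net_weights W N t) * rho p)%C.
  exists (eps / 2). split; [lra |]. intros zw Kzw.
  rewrite network_error by (lra || assumption || (destruct zw; apply Hid)).
  replace (eps / 2) with (INR 4 * (/ (Cmod N * t ^ 2) * (36 * e * (t * M) ^ 2)))
    by (unfold e, t; simpl; field; lra).
  apply csum_Cmod_bound. intros k _.
  rewrite Cmod_mult. apply Rmult_le_compat; try apply Cmod_ge_0.
  - apply net_weights_bound; auto; lra.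
  - destruct (HK zw Kzw) as [Bz Bw].
    apply Hsd.
    + exact (coord_bounded_scaled t M _ _ (Rlt_le _ _ Ht) (dir_z_cases k) Bz).
    + exact (coord_bounded_scaled t M _ _ (Rlt_le _ _ Ht) (dir_w_cases k) Bw).
    replace (t * M) with (d / 4) by (unfold t; field; lra). lra.
Qed.

Definition norm1 (zw : C * C) : R :=
  Rabs (fst (fst zw)) + Rabs (snd (fst zw)) + Rabs (fst (snd zw)) + Rabs (snd (snd zw)).

Lemma open_norm1_lt (r : R) : open (fun zw => norm1 zw < r).
Proof.
  intros x Hx.
  assert (Hrad : 0 < (r - norm1 x) / 5) by lra.
  exists (mkposreal _ Hrad). intros y [[H1 H2] [H3 H4]].
  destruct x as [[x1 x2] [x3 x4]], y as [[y1 y2] [y3 y4]].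
  unfold norm1 in *; simpl in *.
  pose proof (Rabs_triang_inv y1 x1); pose proof (Rabs_triang_inv y2 x2).
  pose proof (Rabs_triang_inv y3 x3); pose proof (Rabs_triang_inv y4 x4).
  unfold ball in H1, H2, H3, H4; simpl in H1, H2, H3, H4.
  unfold AbsRing_ball, abs, minus, plus, opp in H1, H2, H3, H4; simpl in H1, H2, H3, H4.
  unfold Rminus in *. lra.
Qed.

(* A compact subset of C^2 is bounded: cover it by the open l1-balls of
   integer radius and sum the radii of a finite subcover. *)
Lemma compact_bounded (K : C * C -> Prop) : compact2 K ->
  exists M, 0 < M /\ forall zw, K zw -> coord_bounded M (fst zw) /\ coord_bounded M (snd zw).
Proof.
  intros HK.
  destruct (HK nat (fun n zw => norm1 zw < INR n) (fun n => open_norm1_lt _)) as [l Hl].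
  - intros x _. destruct (INR_unbounded (norm1 x)) as [n Hn]. exists n. exact Hn.
  - set (S := fold_right Rplus 0 (map INR l)).
    assert (HS : forall i, In i l -> INR i <= S).
    { unfold S. clear Hl. induction l as [| n l IH]; simpl; [tauto |].
      assert (0 <= fold_right Rplus 0 (map INR l)).
      { clear IH. induction l; simpl; [lra | pose proof (pos_INR a); lra]. }
      intros i [<- | Hi]; [lra | pose proof (pos_INR n); specialize (IH i Hi); lra]. }
    assert (HS0 : 0 <= S).
    { unfold S. clear. induction l; simpl; [lra | pose proof (pos_INR a); lra]. }
    exists (1 + S). split; [lra |].
    intros zw Kzw. destruct (Hl zw Kzw) as [i [Hi Hzw]].
    pose proof (HS i Hi). unfold norm1, coord_bounded in *.
    pose proof (Rabs_pos (fst (fst zw))); pose proof (Rabs_pos (snd (fst zw))).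
    pose proof (Rabs_pos (fst (snd zw))); pose proof (Rabs_pos (snd (snd zw))).
    repeat split; lra.
Qed.

Theorem proposition3p3 (rho : C -> C) (K : C * C -> Prop) (eps : R) :
  C2_complex rho -> ~ R_affine rho -> compact2 K -> 0 < eps ->
  exists (A0 A1 b c : nat -> C) (d : C),
    sup_lt K (network rho A0 A1 b c d) (fun zw => Cmult (fst zw) (snd zw)) eps \/
    sup_lt K (network rho A0 A1 b c d) (fun zw => Cmult (fst zw) (Cconj (snd zw))) eps \/
    sup_lt K (network rho A0 A1 b c d) (fun zw => Cconj (Cmult (fst zw) (snd zw))) eps.
Proof.
  intros Hrho Hnaff HK Heps.
  destruct (hessian_nonzero rho Hrho Hnaff) as [p Hp].
  destruct (compact_bounded K HK) as [M [HM HKM]].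
  destruct (polarization _ _ _ Hp) as (N & W & HN & HW & [Hid | [Hid | Hid]]).
  - destruct (network_approximation rho p K M eps N W (fun zw => Cmult (fst zw) (snd zw))
                Hrho HM HKM Heps HN HW Hid) as (A0 & A1 & b & c & d & H).
    exists A0, A1, b, c, d. left. exact H.
  - destruct (network_approximation rho p K M eps N W
                (fun zw => Cmult (fst zw) (Cconj (snd zw)))
                Hrho HM HKM Heps HN HW Hid) as (A0 & A1 & b & c & d & H).
    exists A0, A1, b, c, d. right; left. exact H.
  - destruct (network_approximation rho p K M eps N W
                (fun zw => Cconj (Cmult (fst zw) (snd zw)))
                Hrho HM HKM Heps HN HW Hid) as (A0 & A1 & b & c & d & H).
    exists A0, A1, b, c, d. right; right. exact H.
Qed.
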